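(* Let $k\geq 3$ and let $G$ be a diregular $(2,k,+3)$-digraph. Let $u,v$ be distinct vertices with exactly one common out-neighbour $u_2$, and write $N^+(u)=\{u_1,u_2\}$, $N^+(v)=\{v_1,u_2\}$. Then $v_1\in O(u)$ or $u_1\in O(v)$.
   Context: A digraph is $k$-geodetic if for every ordered pair of vertices $x,y$ there is at most one directed path from $x$ to $y$ of length at most $k$ (the trivial path counts). A diregular $(2,k,+3)$-digraph is a $k$-geodetic digraph of order $1+2+\dots+2^k+3$ in which every vertex has in- and out-degree $2$. $N^+(x)$ is the set of out-neighbours of $x$. $d(x,y)$ is the directed distance; $O(x)=\{y: d(x,y)\geq k+1\}$ is the outlier set of $x$. *)

From mathcomp Require Import all_boot.
Set Implicit Arguments. Unset Strict Implicit. Unset Printing Implicit Defensive.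

(* A digraph is a relation e : rel T on a finite vertex type T (arc x -> y iff e x y).
   A directed walk from x of length n is a sequence p with size p = n,
   path e x p, ending at last x p. *)

Definition outN (T : finType) (e : rel T) (x : T) : {set T} := [set y | e x y].
Definition inN (T : finType) (e : rel T) (x : T) : {set T} := [set y | e y x].

(* k-geodetic: for all x y, at most one directed x-y walk of length <= k
   (the trivial walk of length 0 counts). *)
Definition k_geodetic (T : finType) (e : rel T) (k : nat) : Prop :=
  forall (x : T) (p q : seq T),
    size p <= k -> size q <= k -> path e x p -> path e x q ->
    last x p = last x q -> p = q.

Definition diregular (T : finType) (e : rel T) (d : nat) : Prop :=
  forall x : T, #|outN e x| = d /\ #|inN e x| = d.

Definition digraph_2k3 (T : finType) (e : rel T) (k : nat) : Prop :=
  [/\ k_geodetic e k, diregular e 2 & #|T| = (\sum_(i < k.+1) 2 ^ i) + 3].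

Definition dist_le (T : finType) (e : rel T) (n : nat) (x y : T) : Prop :=
  exists p : seq T, [/\ size p <= n, path e x p & last x p = y].

Definition outlier (T : finType) (e : rel T) (k : nat) (x y : T) : Prop :=
  ~ dist_le e k x y.

From mathcomp Require Import all_boot zify.
Set Implicit Arguments. Unset Strict Implicit. Unset Printing Implicit Defensive.

(* Write k = n + 1 and suppose d(u,v1) <= k and d(v,u1) <= k.  Since u2 is the
   only common out-neighbour of u and v, this forces d(u1,v1) <= n and
   d(v1,u1) <= n.  In a 2-out-regular k-geodetic digraph the ball of radius n
   around any vertex is a Moore tree with 2^(n+1) - 1 vertices.  The balls
   around u2 and around v1 are disjoint (both hang below v), the ball around u1
   meets neither u2's ball (both hang below u) nor u, v, and since the closed
   walk u1 ~> v1 ~> u1 has length > k, at least three vertices of u1's ball lie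
   outside v1's ball.  Together with u and v this gives 2^(k+1) + 3 vertices,
   one more than the order. *)

Section GeodeticBalls.
Variables (T : finType) (e : rel T).

Fixpoint ball (j : nat) (x : T) : {set T} :=
  if j is j'.+1 then x |: \bigcup_(z in outN e x) ball j' z else [set x].

Lemma ballP j x y : reflect (dist_le e j x y) (y \in ball j x).
Proof.
apply: (iffP idP).
- elim: j x => [|j IH] x /=; first by rewrite inE => /eqP ->; exists [::].
  case/setU1P => [->|/bigcupP [z]]; first by exists [::].
  rewrite inE => exz /IH [p [sp pp lp]].
  by exists (z :: p); rewrite /= exz.
- case=> p [sp pp <-] {y}; elim: j x p sp pp => [|j IH] x [|z p] //= sp.
  + by rewrite inE.
  + by rewrite setU11.
  case/andP => exz pz; apply/setU1P; right; apply/bigcupP.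
  by exists z; rewrite ?inE // IH.
Qed.

Lemma mem_outN x y : (y \in outN e x) = e x y.
Proof. by rewrite inE. Qed.

Lemma mem_ball j x : x \in ball j x.
Proof. by apply/ballP; exists [::]. Qed.

Variable n : nat.
Hypothesis geo : k_geodetic e n.+1.
Hypothesis outdeg2 : forall x, #|outN e x| = 2.

Lemma no_short_cycle x p : path e x p -> size p <= n.+1 -> last x p = x -> p = [::].
Proof. by move=> pp sp lp; apply: (geo sp _ pp). Qed.

Lemma outN_two x : exists y1 y2, [/\ y1 != y2, e x y1 & e x y2].
Proof.
have /eqP/cards2P [y1 [y2 [ne hs]]] := outdeg2 x.
by exists y1, y2; rewrite -!mem_outN hs !inE !eqxx orbT.
Qed.

Lemma outN_other x y : e x y -> exists2 z, z != y & e x z.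
Proof.
move=> exy; have [y1 [y2 [ne e1 e2]]] := outN_two x.
case: (eqVneq y1 y) => [<-|]; last by exists y1.
by exists y2; rewrite // eq_sym.
Qed.

Lemma exists_walk x m : exists2 p, path e x p & size p = m.
Proof.
elim: m x => [|m IH] x; first by exists [::].
have [y [_ [_ exy _]]] := outN_two x.
by have [p pp sp] := IH y; exists (y :: p); rewrite /= ?exy ?sp.
Qed.

Lemma notin_ball_succ j x y : j <= n -> e x y -> x \notin ball j y.
Proof.
move=> hj exy; apply/ballP => -[p [sp pp lp]].
have := @no_short_cycle x (y :: p); rewrite /= exy pp lp.
by move=> /(_ isT (leq_trans sp hj) erefl).
Qed.

Lemma disjoint_ball_succ j x a b :
  j <= n -> e x a -> e x b -> a != b -> [disjoint ball j a & ball j b].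
Proof.
move=> hj exa exb ab; rewrite disjoint_subset; apply/subsetP => y /ballP [p [sp pp lp]].
rewrite inE /=; apply/ballP => -[q [sq pq lq]].
have := geo (x := x) (p := a :: p) (q := b :: q).
rewrite /= exa exb pp pq lp lq => /(_ (leq_trans sp hj) (leq_trans sq hj) isT isT erefl).
by case=> eab; rewrite eab eqxx in ab.
Qed.

Lemma card_ball j x : j <= n -> 2 ^ j.+1 <= #|ball j x|.+1.
Proof.
elim: j x => [|j IH] x hj; first by rewrite /= cards1.
have [y1 [y2 [ne e1 e2]]] := outN_two x.
have sub : x |: (ball j y1 :|: ball j y2) \subset ball j.+1 x.
  by apply/setUS/subUsetP; split; apply: bigcup_sup; rewrite inE.
have x_out : x \notin ball j y1 :|: ball j y2.
  by rewrite inE negb_or !notin_ball_succ // ltnW.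
have /eqP card12 := (leq_card_setU (ball j y1) (ball j y2)).2.
rewrite (disjoint_ball_succ (ltnW hj) e1 e2 ne) in card12.
have := subset_leq_card sub; rewrite cardsU1 x_out card12 expnS.
have := IH y1 (ltnW hj); have := IH y2 (ltnW hj); lia.
Qed.

Lemma round_trip_long x y p q : x != y -> path e x p -> last x p = y ->
  path e y q -> last y q = x -> n.+1 < size p + size q.
Proof.
move=> nxy pp lp pq lq; rewrite ltnNge; apply/negP => sz.
have := @no_short_cycle x (p ++ q).
rewrite cat_path pp lp pq last_cat lp lq size_cat => /(_ isT sz erefl).
by case: p lp {pp sz} => //= lp; rewrite lp eqxx in nxy.
Qed.

Lemma notin_ball_far x y p r : path e y p -> last y p = x -> path e x r ->
  size p + size r = n.+1 -> last x r \notin ball n y.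
Proof.
move=> pp lp pr sz; apply/ballP => -[s [ss ps ls]].
have := geo (x := y) (p := p ++ r) (q := s).
rewrite size_cat sz cat_path pp lp pr last_cat lp ls.
move=> /(_ (leqnn _) (leqW ss) isT ps erefl) /(congr1 size).
by rewrite size_cat sz; lia.
Qed.

Lemma three_le_card_ballD x y : x != y -> dist_le e n x y -> dist_le e n y x ->
  3 <= #|ball n x :\: ball n y|.
Proof.
move=> nxy [p [sp pp lp]] [q [sq pq lq]].
have long := round_trip_long nxy pp lp pq lq.
case/lastP: p sp pp lp long => [|p' y'] sp pp lp long; first by rewrite /= in long; lia.
rewrite last_rcons in lp; subst y'; rewrite size_rcons in sp long.
move: pp; rewrite rcons_path => /andP [pp' ewy].
have [c ncy ewc] := outN_other ewy.
have [r pr sr] := exists_walk x (n - size q).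
have [z1 [z2 [nz ez1 ez2]]] := outN_two (last x r).
(* z1 and z2 end walks y ~> x ~> z of length n + 1, so they lie outside ball n y;
   c, the other out-neighbour of y's predecessor on p, is reached from x in as
   many steps as y, and the round trip x ~> y ~> x being longer than n + 1 keeps
   it apart from z1 and z2. *)
have zD z : e (last x r) z -> z \in ball n x :\: ball n y.
  move=> ez; rewrite inE; apply/andP; split.
  - rewrite -(last_rcons x r z); apply: notin_ball_far pq lq _ _.
      by rewrite rcons_path pr ez.
    by rewrite size_rcons sr; lia.
  apply/ballP; exists (rcons r z); rewrite size_rcons rcons_path pr ez last_rcons.
  by split => //; lia.
have cD : c \in ball n x :\: ball n y.
  rewrite inE (disjointFr (disjoint_ball_succ (leqnn n) ewc ewy ncy)) ?mem_ball //=.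
  by apply/ballP; exists (rcons p' c); rewrite size_rcons rcons_path pp' ewc last_rcons.
have zc z : e (last x r) z -> z != c.
  move=> ez; apply/eqP => zc; subst z.
  have := geo (x := x) (p := rcons r c) (q := rcons p' c).
  rewrite !size_rcons !rcons_path pr pp' ez ewc !last_rcons sr.
  by move=> /(_ _ (ltnW sp) isT isT erefl) /(congr1 size); rewrite !size_rcons; lia.
apply: (leq_trans _ (subset_leq_card (_ : z1 |: [set z2; c] \subset _))).
  by rewrite cardsU1 cards2 !inE negb_or nz !zc.
by apply/subsetP => z /setU1P [->|/set2P [->|->]] //; apply: zD.
Qed.

Lemma notin_ball_common_succ x x1 c y y1 :
  e x x1 -> e x c -> e y c -> e y y1 -> dist_le e n x1 y1 -> y \notin ball n x1.
Proof.
move=> ex1 exc eyc ey1 [p [sp pp lp]]; apply/ballP => -[r [sr pr lr]].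
have rp : rcons r y1 = p.
  apply: (geo (x := x1)); rewrite ?size_rcons ?rcons_path ?pr ?lr ?ey1 ?last_rcons ?lp //.
  exact: leqW.
have := geo (x := x) (p := x1 :: rcons r c) (q := [:: c]).
rewrite /= rcons_path ex1 exc pr lr eyc last_rcons.
have sz : (size (rcons r c)).+1 <= n.+1 by rewrite !size_rcons -(size_rcons r y1) rp.
by move=> /(_ sz isT isT isT erefl) [_ /(congr1 size)]; rewrite size_rcons.
Qed.

Lemma dist_le_other_succ x x1 c y y1 : 0 < n -> outN e x = [set x1; c] ->
  e y y1 -> e y c -> y1 != c -> dist_le e n.+1 x y1 -> dist_le e n x1 y1.
Proof.
move=> n0 hx ey1 eyc ny1 [[|z p] [sp pp /= lp]].
  have exc : e x c by rewrite -mem_outN hx !inE eqxx orbT.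
  subst y1; have := geo (x := y) (p := [:: x; c]) (q := [:: c]).
  by rewrite /= ey1 exc eyc => /(_ n0 isT isT isT erefl).
move: pp => /= /andP [exz pp].
move: exz; rewrite -mem_outN hx !inE => /orP [/eqP zx1|/eqP zc]; subst z.
  by exists p.
have := geo (x := y) (p := c :: p) (q := [:: y1]).
rewrite /= eyc pp ey1 lp => /(_ sp isT isT isT erefl) [cy1].
by rewrite cy1 eqxx in ny1.
Qed.

Lemma card_ge_close_other_succs u v u1 u2 v1 : u != v ->
  e u u1 -> e u u2 -> e v v1 -> e v u2 -> u1 != u2 -> v1 != u2 -> u1 != v1 ->
  dist_le e n u1 v1 -> dist_le e n v1 u1 -> 2 ^ n.+2 + 3 <= #|T|.
Proof.
move=> nuv eu1 eu2 ev1 ev2 nu12 nv12 nuv1 d1 d2.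
have uS : u \notin (ball n u1 :|: ball n v1) :|: ball n u2.
  rewrite !inE (negbTE (notin_ball_common_succ ev1 ev2 eu2 eu1 d2)) ?orbF /=.
  by rewrite negb_or !notin_ball_succ.
have vS : v \notin (ball n u1 :|: ball n v1) :|: ball n u2.
  rewrite !inE (negbTE (notin_ball_common_succ eu1 eu2 ev2 ev1 d1)) ?orbF /=.
  by rewrite negb_or !notin_ball_succ.
have disjU : (ball n u1 :|: ball n v1) :&: ball n u2 = set0.
  rewrite setIUl !disjoint_setI0 ?setU0 //.
  - exact: disjoint_ball_succ ev1 ev2 nv12.
  - exact: disjoint_ball_succ eu1 eu2 nu12.
have := max_card (mem (u |: (v |: ((ball n u1 :|: ball n v1) :|: ball n u2)))).
rewrite !cardsU1 in_setU1 negb_or nuv uS vS cardsU disjU cards0 subn0.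
have := cardsUI (ball n u1) (ball n v1); have := cardsD (ball n u1) (ball n v1).
have := subset_leq_card (subsetIl (ball n u1) (ball n v1)).
have := three_le_card_ballD nuv1 d1 d2.
have := card_ball u2 (leqnn n); have := card_ball v1 (leqnn n).
rewrite !expnS; lia.
Qed.

End GeodeticBalls.

Lemma sum_pow2 m : (\sum_(i < m) 2 ^ i).+1 = 2 ^ m.
Proof.
elim: m => [|m IH]; first by rewrite big_ord0.
by rewrite big_ord_recr /= -addSn IH expnS mul2n -addnn.
Qed.

Theorem lemma5 (T : finType) (e : rel T) (k : nat) (u v u1 u2 v1 : T) :
  3 <= k ->
  digraph_2k3 e k ->
  u != v ->
  outN e u :&: outN e v = [set u2] ->
  outN e u = [set u1; u2] ->
  outN e v = [set v1; u2] ->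
  outlier e k u v1 \/ outlier e k v u1.
Proof.
move=> hk [geo reg cardT] nuv hI hu hv.
have [n kE] : exists n, k = n.+1 by exists k.-1; lia.
subst k; have outdeg2 x : #|outN e x| = 2 := (reg x).1.
have [eu1 eu2] : e u u1 /\ e u u2 by rewrite -!mem_outN hu !inE !eqxx orbT.
have [ev1 ev2] : e v v1 /\ e v u2 by rewrite -!mem_outN hv !inE !eqxx orbT.
have nu12 : u1 != u2 by have := outdeg2 u; rewrite hu cards2; case: (u1 != u2).
have nv12 : v1 != u2 by have := outdeg2 v; rewrite hv cards2; case: (v1 != u2).
have nuv1 : u1 != v1.
  by apply: contraNneq nu12 => E; rewrite -in_set1 -hI in_setI !mem_outN eu1 E ev1.
case: (ballP e n.+1 u v1) => [d1|]; last by left.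
case: (ballP e n.+1 v u1) => [d2|]; last by right.
have n0 : 0 < n by lia.
have := card_ge_close_other_succs geo outdeg2 nuv eu1 eu2 ev1 ev2 nu12 nv12 nuv1
  (dist_le_other_succ geo n0 hu ev1 ev2 nv12 d1)
  (dist_le_other_succ geo n0 hv eu1 eu2 nu12 d2).
by rewrite cardT; have := sum_pow2 n.+2; lia.
Qed.
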